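(* Let $X$ be a uniformly locally finite metric space, $\sigma$ an automorphism of $\mathrm{C}^*_u(X)$, and $f\colon X\to X$ a map such that \[ \inf_{x\in X}\|\sigma(e_{xx})\delta_{f(x)}\|>0. \] Suppose that for every $A\subseteq X$ there is a unitary $u\in\mathrm{C}^*_u(X)$ with $\sigma(p_A)=up_Au^*$. Then $f$ is close to the identity, i.e. $\sup_{x\in X}d(x,f(x))<\infty$.
   Context: Uniformly locally finite: $\sup_x|B_r(x)|<\infty$ for all $r>0$. $(\delta_x)$ canonical basis of $\ell_2(X)$; $e_{xx}$ is the rank-one orthogonal projection onto $\mathbb{C}\delta_x$; $p_A$ is the orthogonal projection onto $\ell_2(A)$. A partial translation is a bijection $f\colon\mathrm{dom}(f)\subseteq X\to\mathrm{ran}(f)\subseteq X$ with $\sup_{x}d(x,f(x))<\infty$; $v_f\delta_x=\delta_{f(x)}$ on $\mathrm{dom}(f)$, $0$ elsewhere; $\mathrm{C}^*_u(X)$ is the $\mathrm{C}^*$-algebra generated by all $v_f$. *)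

From HB Require Import structures.
From mathcomp Require Import all_boot all_order all_algebra finmap.
From mathcomp Require Import complex.
From mathcomp Require Import boolp classical_sets reals constructive_ereal ereal esum.

Set Implicit Arguments.
Unset Strict Implicit.
Unset Printing Implicit Defensive.

Import Order.TTheory GRing.Theory Num.Theory.
Local Open Scope ring_scope.

(* Bounded operators on l2(X) are represented by their matrices
   T : X -> X -> C w.r.t. the canonical basis (delta_x): T x y = <T delta_y, delta_x>. *)

Section UniformRoe.
Variable R : realType.
Local Notation C := (R[i]).
Variable X : choiceType.

Definition nrm2 (z : C) : R := (@complex.Re R z) ^+ 2 + (@complex.Im R z) ^+ 2.

Definition mat := X -> X -> C.

Definition l2norm2 (v : X -> C) : \bar R :=
  (\esum_(z in [set: X]) (nrm2 (v z))%:E)%E.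

(* ||T|| <= M : for every finitely supported vector v (support in S),
   ||T v||^2 <= M^2 ||v||^2, the norm of T v being the sup over finite F. *)
Definition bounded_by (T : mat) (M : R) : Prop :=
  forall (S F : {fset X}) (v : X -> C),
    \sum_(x <- F) nrm2 (\sum_(y <- S) T x y * v y)
      <= M ^+ 2 * \sum_(y <- S) nrm2 (v y).

Definition sum_conv (g : X -> C) (c : C) : Prop :=
  forall e : R, 0 < e -> exists F0 : {fset X},
    forall F : {fset X}, fsubset F0 F -> nrm2 (\sum_(y <- F) g y - c) <= e.

(* operator product (matrix product; entries converge for bounded operators) *)
Definition mprod (S T : mat) : mat :=
  fun x z => xget 0 [set c | sum_conv (fun y => S x y * T y z) c].

Definition adj (T : mat) : mat := fun x y => conjc (T y x).

Definition idm : mat := fun x y => if x == y then 1 else 0.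

Definition proj (A : set X) : mat :=
  fun x y => if (x == y) && `[< A x >] then 1 else 0.

Definition eproj (x0 : X) : mat := proj [set x0].

Variable d : X -> X -> R.

Definition is_metric : Prop :=
  [/\ forall x y, 0 <= d x y,
      forall x y, d x y = 0 <-> x = y,
      forall x y, d x y = d y x &
      forall x y z, d x z <= d x y + d y z].

Definition unif_loc_finite : Prop :=
  forall r : R, exists N : nat, forall x : X,
    exists s : seq X, (size s <= N)%N /\ forall y, d x y <= r -> y \in s.

(* partial translation, encoded as a partial map f : X -> option X
   (dom f = {x | f x <> None}) *)
Definition is_ptrans (f : X -> option X) : Prop :=
  (forall x y z, f x = Some z -> f y = Some z -> x = y) /\
  exists r : R, forall x y, f x = Some y -> d x y <= r.

(* v_f delta_x = delta_{f x} on dom f, 0 elsewhere *)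
Definition vmat (f : X -> option X) : mat :=
  fun y x => if f x == Some y then 1 else 0.

Inductive star_gen : mat -> Prop :=
  | sg_pt f : is_ptrans f -> star_gen (vmat f)
  | sg_lin (a : C) S T : star_gen S -> star_gen T ->
      star_gen (fun x y => a * S x y + T x y)
  | sg_mul S T : star_gen S -> star_gen T -> star_gen (mprod S T)
  | sg_adj S : star_gen S -> star_gen (adj S).

Definition Cu (T : mat) : Prop :=
  forall e : R, 0 < e -> exists S, star_gen S /\
    bounded_by (fun x y => T x y - S x y) e.

Definition is_Cu_automorphism (s : mat -> mat) : Prop :=
  (forall T, Cu T -> Cu (s T)) /\
  (forall T1 T2, Cu T1 -> Cu T2 -> s T1 = s T2 -> T1 = T2) /\
  (forall T, Cu T -> exists T', Cu T' /\ s T' = T) /\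
  (forall (a : C) T1 T2, Cu T1 -> Cu T2 ->
     s (fun x y => a * T1 x y + T2 x y) = (fun x y => a * s T1 x y + s T2 x y)) /\
  (forall T1 T2, Cu T1 -> Cu T2 -> s (mprod T1 T2) = mprod (s T1) (s T2)) /\
  (forall T, Cu T -> s (adj T) = adj (s T)).

Definition unitary_Cu (u : mat) : Prop :=
  [/\ Cu u, mprod u (adj u) = idm & mprod (adj u) u = idm].

End UniformRoe.

Arguments eproj {R X} x0 _ _.
Arguments proj {R X} A _ _.
Arguments idm {R X} _ _.

From mathcomp Require Import all_boot all_order all_algebra finmap.
From mathcomp Require Import complex.
From mathcomp Require Import boolp classical_sets reals constructive_ereal ereal esum.
From mathcomp Require Import fsbigop.
From mathcomp Require Import lra ring.

(* Write Q_A for the projection s(p_A). Its diagonal entry <Q_A δ_y, δ_y> is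
   ||Q_A δ_y||^2 ∈ [0,1] and is additive in A, so the hypothesis
   ||s(e_xx) δ_(f x)|| >= c lets at most 1/c^2 points x share a value f x.
   Writing Q_A = u p_A u^* with u a norm limit of finite-propagation operators,
   ||Q_A δ_y|| is small once y is far from A; hence f maps every A into a
   bounded neighbourhood of A. If f were not close to the identity, these two
   facts and uniform local finiteness would give points x_0, x_1, ... with
   d(f x_m, x_k) > m for all m, k, and A = {x_k} would violate the second. *)

Set Implicit Arguments.
Unset Strict Implicit.
Unset Printing Implicit Defensive.

Import Order.TTheory GRing.Theory Num.Theory.
Local Open Scope ring_scope.

Section SquaredModulus.
Variable R : realType.
Implicit Types (z w : R[i]) (r : R).

Lemma nrm2_ge0 z : 0 <= nrm2 z.
Proof. by case: z => a b; rewrite /nrm2 /=; nra. Qed.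

Lemma nrm2_eq0 z : nrm2 z = 0 -> z = 0.
Proof.
case: z => a b; rewrite /nrm2 /= => h.
have -> : a = 0 by nra.
by have -> : b = 0 by nra.
Qed.

Lemma nrm2_real r : nrm2 (r%:C)%C = r ^+ 2.
Proof. by rewrite /nrm2 /=; ring. Qed.

Lemma nrm2_0 : nrm2 (0 : R[i]) = 0.
Proof. by rewrite -[0]/(0%:C)%C nrm2_real expr0n. Qed.

Lemma nrm2_1 : nrm2 (1 : R[i]) = 1.
Proof. by rewrite -[1]/(1%:C)%C nrm2_real expr1n. Qed.

Lemma nrm2N z : nrm2 (- z) = nrm2 z.
Proof. by case: z => a b; rewrite /nrm2 /=; ring. Qed.

Lemma nrm2J z : nrm2 z^* = nrm2 z.
Proof. by case: z => a b; rewrite /nrm2 /=; ring. Qed.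

Lemma nrm2D z w : nrm2 (z + w) <= 2 * nrm2 z + 2 * nrm2 w.
Proof.
case: z => a b; case: w => c e; rewrite /nrm2 /=.
by have := sqr_ge0 (a - c); have := sqr_ge0 (b - e); rewrite !expr2; nra.
Qed.

Lemma mulJc z : z^* * z = ((nrm2 z)%:C)%C.
Proof.
case: z => a b; rewrite /nrm2 /=.
by apply/eqP; rewrite eq_complex /=; apply/andP; split; apply/eqP; ring.
Qed.

End SquaredModulus.

Section PartialSums.
Variables (R : realType) (X : choiceType).
Implicit Types (h : X -> R) (g : X -> R[i]).

Lemma uniq_sub_ler_sum (s s' : seq X) h : uniq s -> uniq s' -> {subset s <= s'} ->
  (forall x, 0 <= h x) -> \sum_(x <- s) h x <= \sum_(x <- s') h x.
Proof.
move=> us us' ss' h0; rewrite [X in _ <= X](bigID (mem s)) /=.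
have -> : \sum_(x <- s' | x \in s) h x = \sum_(x <- s) h x.
  rewrite -big_filter; apply/perm_big/uniq_perm; rewrite ?filter_uniq // => x.
  by rewrite mem_filter; case: (boolP (x \in s)) => //= /ss'.
by rewrite lerDl sumr_ge0.
Qed.

Lemma ler_sum_mem (s : seq X) h x : uniq s -> x \in s -> (forall x, 0 <= h x) ->
  h x <= \sum_(y <- s) h y.
Proof.
move=> us xs h0; have := @uniq_sub_ler_sum [:: x] s h isT us.
by rewrite big_seq1; apply => // y; rewrite inE => /eqP ->.
Qed.

Lemma ler_sum_supp (s : seq X) (F : {fset X}) h : (forall x, 0 <= h x) ->
  (forall x, x \notin s -> h x = 0) -> \sum_(x <- F) h x <= \sum_(x <- undup s) h x.
Proof.
move=> h0 hs; rewrite (bigID (mem s)) /= [X in _ + X]big1 ?addr0 // -big_filter.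
apply: uniq_sub_ler_sum; rewrite ?undup_uniq ?filter_uniq //.
by move=> x; rewrite mem_filter mem_undup => /andP[].
Qed.

Lemma sum_conv_uniq g c1 c2 : sum_conv g c1 -> sum_conv g c2 -> c1 = c2.
Proof.
move=> h1 h2; apply/eqP; rewrite -subr_eq0; apply/eqP/nrm2_eq0/eqP.
rewrite eq_le nrm2_ge0 andbT leNgt; apply/negP => pos.
pose e := nrm2 (c1 - c2) / 8.
have e0 : 0 < e by rewrite divr_gt0.
have [F1 HF1] := h1 e e0; have [F2 HF2] := h2 e e0.
have k1 := HF1 (F1 `|` F2)%fset (fsubsetUl _ _).
have k2 := HF2 (F1 `|` F2)%fset (fsubsetUr _ _).
set t := \sum_(y <- (F1 `|` F2)%fset) g y in k1 k2.
have := nrm2D (t - c2) (- (t - c1)); rewrite nrm2N.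
have -> : t - c2 + - (t - c1) = c1 - c2 by ring.
by rewrite /e in k1 k2; lra.
Qed.

Lemma sum_conv_finsupp g (s : seq X) : uniq s -> (forall x, x \notin s -> g x = 0) ->
  sum_conv g (\sum_(x <- s) g x).
Proof.
move=> us g0 e e0; exists (seq_fset tt s) => F /fsubsetP sF.
suff -> : \sum_(y <- F) g y = \sum_(x <- s) g x by rewrite subrr nrm2_0 ltW.
rewrite (bigID (mem s)) /= [X in _ + X]big1 ?addr0 // -big_filter.
apply/perm_big/uniq_perm; rewrite ?filter_uniq // => x.
by rewrite mem_filter; case: (boolP (x \in s)) => //= xs; apply/sF; rewrite seq_fsetE.
Qed.

Definition bounded_sums h := exists B, forall F : {fset X}, \sum_(x <- F) h x <= B.

Definition sup_sums h : R := sup [set t | exists F : {fset X}, t = \sum_(x <- F) h x].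

Lemma sup_sums_ub h (F : {fset X}) : bounded_sums h -> \sum_(x <- F) h x <= sup_sums h.
Proof.
move=> [B hB]; apply: sup_upper_bound; last by exists F.
by split; [exists (\sum_(x <- F) h x), F | exists B => _ [G ->]].
Qed.

Lemma sup_sums_le h b : (forall F : {fset X}, \sum_(x <- F) h x <= b) -> sup_sums h <= b.
Proof. by move=> hb; apply: ge_sup => [|_ [G ->]] //; exists 0, fset0; rewrite big_nil. Qed.

Lemma sup_sums_ge0 h : bounded_sums h -> 0 <= sup_sums h.
Proof. by move=> hb; have := sup_sums_ub fset0 hb; rewrite big_nil. Qed.

Lemma sum_conv_sup_sums h : (forall x, 0 <= h x) -> bounded_sums h ->
  sum_conv (fun x => ((h x)%:C)%C) ((sup_sums h)%:C)%C.
Proof.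
(* [e' <= 1] bounds the squared error by [e'] *)
move=> h0 hb e e0; pose e' := Order.min e 1.
have e'0 : 0 < e' by rewrite lt_min e0 ltr01.
have [_ [F0 ->] lt] : exists2 t, (exists F : {fset X}, t = \sum_(x <- F) h x)
    & sup_sums h - e' < t.
  apply: sup_adherent => //; split; first by exists 0, fset0; rewrite big_nil.
  by case: hb => B hB; exists B => _ [G ->].
exists F0 => F /fsubsetP sF.
rewrite -rmorph_sum -rmorphB nrm2_real.
have le1 : \sum_(x <- F0) h x <= \sum_(x <- F) h x.
  by apply: uniq_sub_ler_sum; rewrite ?fset_uniq.
have le2 := sup_sums_ub F hb.
have e'e : e' <= e by rewrite ge_min lexx.
have e'1 : e' <= 1 by rewrite ge_min lexx orbT.
nra.
Qed.

End PartialSums.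

Section FinitePropagation.
Variables (R : realType) (X : choiceType) (d : X -> X -> R).
Hypothesis dm : is_metric d.
Implicit Types (S T : mat R X).

Lemma metric_sym x y : d x y = d y x.
Proof. by case: dm. Qed.

Lemma metric_triangle x y z : d x z <= d x y + d y z.
Proof. by case: dm. Qed.

Lemma metric_xx x : d x x = 0.
Proof. by case: dm => _ h _ _; apply/h. Qed.

Lemma mprod_sum_conv S T x z c :
  sum_conv (fun y => S x y * T y z) c -> mprod S T x z = c.
Proof. by move=> h; apply: xget_unique => // c' /sum_conv_uniq; apply. Qed.

Lemma bounded_by_row T M y (F : {fset X}) :
  bounded_by T M -> \sum_(z <- F) nrm2 (T y z) <= M ^+ 2.
Proof.
move=> /(_ F [fset y]%fset (fun z => (T y z)^*)); rewrite big_seq_fset1.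
under eq_bigr do rewrite mulrC mulJc.
under [X in _ * X]eq_bigr do rewrite nrm2J.
rewrite -rmorph_sum nrm2_real.
have t0 : 0 <= \sum_(z <- F) nrm2 (T y z) by apply: sumr_ge0 => *; apply: nrm2_ge0.
set t := \sum_(z <- F) nrm2 (T y z) in t0 *.
by have := sqr_ge0 M; rewrite !expr2; nra.
Qed.

Lemma bounded_by_col T M y (F : {fset X}) :
  bounded_by T M -> \sum_(z <- F) nrm2 (T z y) <= M ^+ 2.
Proof.
move=> /(_ [fset y]%fset F (fun=> 1)); rewrite big_seq_fset1 nrm2_1 mulr1.
by under eq_bigr do rewrite big_seq_fset1 mulr1.
Qed.

Definition finite_propagation T := exists r : R, forall x y, r < d x y -> T x y = 0.

Lemma star_gen_finite_propagation T : star_gen d T -> finite_propagation T.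
Proof.
elim=> {T}.
- move=> g [_ [r hr]]; exists r => x y lt; rewrite /vmat.
  by case: eqP => // /hr; rewrite metric_sym leNgt lt.
- move=> a S T _ [r1 h1] _ [r2 h2]; exists (Order.max r1 r2) => x y.
  by rewrite gt_max => /andP[l1 l2]; rewrite h1 // h2 // mulr0 addr0.
- move=> S T _ [r1 h1] _ [r2 h2]; exists (r1 + r2) => x z lt.
  apply: mprod_sum_conv; have := @sum_conv_finsupp R X (fun y => S x y * T y z) [::] isT.
  rewrite big_nil; apply=> y _.
  have [le1|gt1] := lerP (d x y) r1; last by rewrite h1 // mul0r.
  by rewrite h2 ?mulr0 //; have := metric_triangle x y z; lra.
- by move=> S _ [r h]; exists r => x y lt; rewrite /adj h ?conjc0 // metric_sym.
Qed.

End FinitePropagation.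

Section UniformRoeLines.
Variables (R : realType) (X : choiceType) (d : X -> X -> R).
Hypotheses (dm : is_metric d) (ulf : unif_loc_finite d).
Implicit Types (T : mat R X).

Lemma bounded_sums_near (g h : X -> R[i]) (B : R) (s : seq X) :
  (forall F : {fset X}, \sum_(z <- F) nrm2 (g z - h z) <= B) ->
  (forall z, z \notin s -> h z = 0) -> bounded_sums (fun z => nrm2 (g z)).
Proof.
move=> gh hs; exists (2 * B + 2 * \sum_(z <- undup s) nrm2 (h z)) => F.
apply: (@le_trans _ _ (\sum_(z <- F) (2 * nrm2 (g z - h z) + 2 * nrm2 (h z)))).
  by apply: ler_sum => z _; have := nrm2D (g z - h z) (h z); rewrite subrK.
rewrite big_split /= -!mulr_sumr; apply: lerD; rewrite ler_pM2l // ?gh //.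
by apply: ler_sum_supp => [z|z /hs ->]; rewrite ?nrm2_0 ?nrm2_ge0.
Qed.

Lemma Cu_lines_bounded_sums T : Cu d T -> forall y,
  bounded_sums (fun z => nrm2 (T z y)) /\ bounded_sums (fun z => nrm2 (T y z)).
Proof.
move=> /(_ 1 ltr01) [S [/(star_gen_finite_propagation dm) [r hr] bS]] y.
have [N /(_ y) [s [_ hs]]] := ulf r.
have Soff z : z \notin s -> S z y = 0 /\ S y z = 0.
  move=> zs; have far : r < d y z by rewrite ltNge; apply: contra zs => /hs.
  by rewrite !hr // metric_sym.
split; apply: (bounded_sums_near (B := 1 ^+ 2) (s := s)).
- by move=> F; apply: bounded_by_col bS.
- by move=> z /Soff[].
- by move=> F; apply: bounded_by_row bS.
- by move=> z /Soff[].
Qed.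

Definition colnorm2 T y := sup_sums (fun z => nrm2 (T z y)).

Lemma mprod_adj_diag T y : Cu d T -> mprod (adj T) T y y = ((colnorm2 T y)%:C)%C.
Proof.
move=> /Cu_lines_bounded_sums /(_ y) [colT _]; apply: mprod_sum_conv.
have := sum_conv_sup_sums (fun z => nrm2_ge0 (T z y)) colT.
by congr sum_conv; apply: funext => z; rewrite /adj mulJc.
Qed.

Lemma l2norm2_col_le T y : Cu d T -> (l2norm2 (fun z => T z y) <= (colnorm2 T y)%:E)%E.
Proof.
move=> /Cu_lines_bounded_sums /(_ y) [colT _].
apply: ge_ereal_sup => _ [F [finF _] <-].
by rewrite fsbig_finite // sumEFin lee_fin sup_sums_ub.
Qed.

End UniformRoeLines.

Local Open Scope classical_set_scope.

Section Projections.
Variables (R : realType) (X : choiceType) (d : X -> X -> R).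
Hypotheses (dm : is_metric d) (ulf : unif_loc_finite d).
Implicit Types (A : set X).

Lemma Cu_star_gen (S : mat R X) : star_gen d S -> Cu d S.
Proof.
move=> sgS e e0; exists S; split => // F G v.
under eq_bigr do under eq_bigr do rewrite subrr mul0r.
under eq_bigr do rewrite big1 // nrm2_0.
by rewrite big1 // mulr_ge0 ?sqr_ge0 // sumr_ge0 // => *; apply: nrm2_ge0.
Qed.

Lemma proj_Cu A : Cu d (@proj R X A).
Proof.
apply: Cu_star_gen.
have -> : proj A = @vmat R X (fun x => if `[< A x >] then Some x else None).
  apply: funext => y; apply: funext => x; rewrite /proj /vmat.
  have [->|ne] := eqVneq y x; first by case: `[< A x >]; rewrite ?eqxx.
  by case: `[< A x >] => //; case: eqP => // -[] /esym/eqP; rewrite (negbTE ne).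
apply: sg_pt; split.
  by move=> x y z; case: `[< A x >]; case: `[< A y >] => // -[->] [->].
by exists 0 => x y; case: `[< A x >] => // -[<-]; rewrite metric_xx.
Qed.

Lemma adj_proj A : adj (@proj R X A) = proj A.
Proof.
apply: funext => x; apply: funext => y; rewrite /adj /proj eq_sym.
by have [->|] := eqVneq x y; case: `[< _ >]; rewrite ?conjc0 ?conjc1.
Qed.

Lemma mprod_proj A : mprod (@proj R X A) (proj A) = proj A.
Proof.
apply: funext => x; apply: funext => z; apply: mprod_sum_conv.
have := @sum_conv_finsupp R X (fun y => proj A x y * proj A y z) [:: x] isT.
rewrite big_seq1; have -> : proj A x x * proj A x z = proj A x z :> R[i].
  by rewrite /proj eqxx /=; case: `[< A x >]; rewrite ?mul1r // andbF mul0r.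
by apply=> y; rewrite inE => ne; rewrite /proj eq_sym (negbTE ne) mul0r.
Qed.

(* in the shape of the linearity axiom of [is_Cu_automorphism] *)
Lemma proj_setD1 A x : A x ->
  proj A = (fun a b => 1 * @proj R X [set x] a b + proj (A `\ x) a b).
Proof.
move=> Ax; apply: funext => a; apply: funext => b; rewrite /proj mul1r.
case: (a == b) => /=; last by rewrite addr0.
have [->|/eqP nax] := eqVneq a x.
  by rewrite (asboolT Ax) asboolT // asboolF ?addr0 // => -[].
rewrite (asboolF nax) add0r.
have [aA|aA] := pselect (A a); first by rewrite !asboolT.
by rewrite !asboolF // => -[].
Qed.

Lemma mprod_proj_r (u : mat R X) (A : set X) y a :
  mprod u (proj A) y a = u y a * proj A a a.
Proof.
apply: mprod_sum_conv; have := @sum_conv_finsupp R X (fun z => u y z * proj A z a) [:: a] isT.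
by rewrite big_seq1; apply=> z; rewrite inE => ne; rewrite /proj (negbTE ne) mulr0.
Qed.

Lemma conj_proj_diag (u : mat R X) (A : set X) y : Cu d u ->
  mprod (mprod u (proj A)) (adj u) y y =
  ((sup_sums (fun a => if `[< A a >] then nrm2 (u y a) else 0))%:C)%C.
Proof.
move=> /(Cu_lines_bounded_sums dm ulf) /(_ y) [_ rowu].
set h := fun a => _; have h0 a : 0 <= h a by rewrite /h; case: ifP; rewrite ?nrm2_ge0.
have hb : bounded_sums h.
  case: rowu => B hB; exists B => F; apply: le_trans (hB F); apply: ler_sum => a _.
  by rewrite /h; case: ifP; rewrite ?nrm2_ge0.
apply: mprod_sum_conv; have := sum_conv_sup_sums h0 hb.
congr sum_conv; apply: funext => a; rewrite mprod_proj_r /adj /h /proj eqxx /=.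
by case: ifP; rewrite ?mulr0 ?mul0r // mulr1 mulrC mulJc.
Qed.

End Projections.

Section ImageProjections.
Variables (R : realType) (X : choiceType) (d : X -> X -> R).
Hypotheses (dm : is_metric d) (ulf : unif_loc_finite d).
Variable s : mat R X -> mat R X.
Hypothesis hs : is_Cu_automorphism d s.
Implicit Types (A : set X).

Lemma Cu_image_proj A : Cu d (s (proj A)).
Proof. by case: hs => + _; apply; apply: proj_Cu. Qed.

Lemma image_proj_adjM A : s (proj A) = mprod (adj (s (proj A))) (s (proj A)).
Proof.
case: hs => _ [_ [_ [_ [sM sJ]]]].
by rewrite -{1}mprod_proj sM -?sJ ?adj_proj //; apply: proj_Cu.
Qed.

Lemma image_proj_diag A y : s (proj A) y y = ((colnorm2 (s (proj A)) y)%:C)%C.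
Proof. by rewrite {1}image_proj_adjM (mprod_adj_diag dm ulf) //; apply: Cu_image_proj. Qed.

Lemma colnorm2_image_proj_ge0 A y : 0 <= colnorm2 (s (proj A)) y.
Proof. by apply: sup_sums_ge0; case: (Cu_lines_bounded_sums dm ulf (Cu_image_proj A) y). Qed.

Lemma colnorm2_image_proj_le1 A y : colnorm2 (s (proj A)) y <= 1.
Proof.
have [colQ _] := Cu_lines_bounded_sums dm ulf (Cu_image_proj A) y.
(* ||Q δ_y||^2 >= |<Q δ_y, δ_y>|^2 = (||Q δ_y||^2)^2 *)
have := sup_sums_ub [fset y]%fset colQ; rewrite big_seq_fset1 image_proj_diag nrm2_real.
by have := colnorm2_image_proj_ge0 A y; rewrite expr2 /colnorm2; nra.
Qed.

Lemma colnorm2_image_proj_setD1 A x y : A x ->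
  colnorm2 (s (proj A)) y = colnorm2 (s (proj [set x])) y + colnorm2 (s (proj (A `\ x))) y.
Proof.
move=> Ax; case: hs => _ [_ [_ [sD _]]].
have := image_proj_diag A y.
rewrite {1}(proj_setD1 R Ax) sD ?mul1r ?image_proj_diag -?rmorphD; last 2 first.
- exact: proj_Cu.
- exact: proj_Cu.
by move=> /complexI.
Qed.

Lemma sum_colnorm2_image_points (L : seq X) y : uniq L ->
  \sum_(x <- L) colnorm2 (s (proj [set x])) y <= colnorm2 (s (proj [set` L])) y.
Proof.
elim: L => [_|a L IH /= /andP[aL uL]]; first by rewrite big_nil colnorm2_image_proj_ge0.
rewrite big_cons [leRHS](@colnorm2_image_proj_setD1 _ a) /= ?mem_head // lerD2l.
have -> : [set` a :: L] `\ a = [set` L].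
  apply/seteqP; split => z /=; rewrite inE; first by case=> /orP[/eqP|//].
  by move=> zL; split; [rewrite zL orbT | move=> za; rewrite -za zL in aL].
exact: IH.
Qed.

Lemma sum_colnorm2_image_points_le1 (L : seq X) y : uniq L ->
  \sum_(x <- L) colnorm2 (s (proj [set x])) y <= 1.
Proof.
by move=> /sum_colnorm2_image_points /le_trans; apply; apply: colnorm2_image_proj_le1.
Qed.

End ImageProjections.

Section CloseToProjections.
Variables (R : realType) (X : choiceType) (d : X -> X -> R).
Hypotheses (dm : is_metric d) (ulf : unif_loc_finite d).
Variable s : mat R X -> mat R X.
Hypothesis hs : is_Cu_automorphism d s.

Lemma colnorm2_image_proj_far (A : set X) (u : mat R X) (e : R) :
  unitary_Cu d u -> s (proj A) = mprod (mprod u (proj A)) (adj u) -> 0 < e ->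
  exists r : R, forall y, (forall a, A a -> r < d y a) -> colnorm2 (s (proj A)) y <= e ^+ 2.
Proof.
move=> [cu _ _] sA e0.
have [S [/(star_gen_finite_propagation dm) [r hr] bS]] := cu e e0.
exists r => y far.
have := image_proj_diag dm ulf hs A y; rewrite {1}sA (conj_proj_diag dm ulf) // => /complexI <-.
apply: sup_sums_le => F; apply: le_trans (bounded_by_row y F bS).
apply: ler_sum => a _; case: ifP => [/asboolP Aa|_]; last exact: nrm2_ge0.
by rewrite (hr y a (far a Aa)) subr0.
Qed.

Variables (f : X -> X) (c : R).
Hypothesis image_point_large : forall x, c ^+ 2 <= colnorm2 (s (proj [set x])) (f x).

Lemma image_fibers_bound (L U : seq X) : uniq L -> {in L, forall x, f x \in U} ->
  (size L)%:R * c ^+ 2 <= (size U)%:R.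
Proof.
move=> uL LU.
apply: (@le_trans _ _ (\sum_(x <- L) \sum_(y <- undup U) colnorm2 (s (proj [set x])) y)).
  have -> : (size L)%:R * c ^+ 2 = \sum_(x <- L) c ^+ 2.
    by rewrite big_const_seq count_predT iter_addr addr0 mulr_natl.
  rewrite big_seq [leRHS]big_seq; apply: ler_sum => x xL.
  apply: le_trans (image_point_large x) (ler_sum_mem _ _ _); rewrite ?undup_uniq //.
  - by rewrite mem_undup LU.
  - by move=> y; apply: (colnorm2_image_proj_ge0 dm ulf hs).
rewrite exchange_big /=.
apply: (@le_trans _ _ (\sum_(y <- undup U) (1 : R))).
  by apply: ler_sum => y _; apply: (sum_colnorm2_image_points_le1 dm ulf hs).
by rewrite big_const_seq count_predT iter_addr addr0 ler_nat size_undup.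
Qed.

Hypothesis c_gt0 : 0 < c.

Lemma image_near (A : set X) (u : mat R X) :
  unitary_Cu d u -> s (proj A) = mprod (mprod u (proj A)) (adj u) ->
  exists r : R, forall x, A x -> exists2 a, A a & d (f x) a <= r.
Proof.
move=> uu sA; have [r hr] := colnorm2_image_proj_far uu sA (divr_gt0 c_gt0 (ltr0n _ 2)).
exists r => x Ax; have [//|nonear] := pselect (exists2 a, A a & d (f x) a <= r).
have far a : A a -> r < d (f x) a.
  by move=> Aa; rewrite ltNge; apply/negP => le; apply: nonear; exists a.
have := hr (f x) far; rewrite (colnorm2_image_proj_setD1 dm ulf hs _ Ax).
have := image_point_large x; have := colnorm2_image_proj_ge0 dm ulf hs (A `\ x) (f x).
have : 0 < c ^+ 2 by rewrite exprn_gt0.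
by rewrite expr_div_n; lra.
Qed.

End CloseToProjections.

Lemma exists_nat_gt (R : archiRealDomainType) (x : R) : exists n : nat, x < n%:R.
Proof.
by exists (Num.bound `|x|); apply: le_lt_trans (ler_norm x) (archi_boundP (normr_ge0 x)).
Qed.

Lemma exists_gt_notin (R : realDomainType) (X : eqType) (g : X -> R) :
  (forall B, exists x, B < g x) -> forall (n : R) (E : seq X), exists x, n < g x /\ x \notin E.
Proof.
move=> unb n E; elim: E n => [|e E IH] n; first by have [x] := unb n; exists x.
have [x [+ xE]] := IH (Num.max n (g e)); rewrite gt_max => /andP[nx ex].
by exists x; rewrite inE negb_or xE andbT; split => //; apply: contraTneq ex => ->; rewrite ltxx.
Qed.

Lemma exists_uniq_seq (X : eqType) (P : X -> Prop) :
  (forall E : seq X, exists x, P x /\ x \notin E) ->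
  forall k, exists L : seq X, [/\ uniq L, size L = k & {in L, forall x, P x}].
Proof.
move=> fresh; elim=> [|k [L [uL sL PL]]]; first by exists [::].
have [x [Px xL]] := fresh L; exists (x :: L); split; rewrite /= ?xL ?sL //.
by move=> y; rewrite inE => /orP[/eqP ->|/PL].
Qed.

Lemma ulf_ball_cover (R : realType) (X : choiceType) (d : X -> X -> R) :
  unif_loc_finite d -> forall (r : R) (l : seq X),
  exists E : seq X, forall y, y \in l -> forall z, d y z <= r -> z \in E.
Proof.
move=> ulf r; have [N hN] := ulf r; elim=> [|a l [E hE]]; first by exists [::].
have [sa [_ hsa]] := hN a; exists (sa ++ E) => y; rewrite inE.
by case/orP => [/eqP -> z /hsa | yl z /(hE y yl)]; rewrite mem_cat => ->; rewrite ?orbT.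
Qed.

Section CloseToIdentity.
Variables (R : realType) (X : choiceType) (d : X -> X -> R) (f : X -> X) (k : R).
Hypotheses (dm : is_metric d) (ulf : unif_loc_finite d) (k_gt0 : 0 < k).
Hypothesis fibers_bound : forall L U : seq X, uniq L -> {in L, forall x, f x \in U} ->
  (size L)%:R * k <= (size U)%:R.
Hypothesis near_image : forall A : set X,
  exists r : R, forall x, A x -> exists2 a, A a & d (f x) a <= r.

Section Unbounded.
Hypothesis unbounded : forall B : R, exists x, B < d x (f x).

Lemma exists_displaced_fresh (n : R) (E U : seq X) :
  exists x, [/\ n < d x (f x), x \notin E & f x \notin U].
Proof.
have [//|none] := pselect (exists x, [/\ n < d x (f x), x \notin E & f x \notin U]).
have [K ltK] := exists_nat_gt ((size U)%:R / k).
have fresh (E' : seq X) : exists x, (n < d x (f x) /\ x \notin E) /\ x \notin E'.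
  have [x [nx]] := exists_gt_notin unbounded n (E ++ E').
  by rewrite mem_cat negb_or => /andP[xE xE']; exists x.
have [L [uL sL PL]] := exists_uniq_seq fresh K.
have LU : {in L, forall x, f x \in U}.
  by move=> x /PL [nx xE]; apply: contraT => fxU; exfalso; apply: none; exists x.
have := fibers_bound uL LU; rewrite sL -ler_pdivlMr //; lra.
Qed.

Lemma exists_separated_next (n : nat) (l : seq X) :
  exists x, [/\ n%:R < d x (f x), {in l, forall y, n%:R < d (f y) x}
                & {in l, forall y, n%:R < d (f x) y}].
Proof.
have [E hE] := ulf_ball_cover ulf n%:R [seq f y | y <- l].
have [U hU] := ulf_ball_cover ulf n%:R l.
have [x [nx xE fxU]] := exists_displaced_fresh n%:R E U.
exists x; split => // y yl; rewrite ltNge; apply/negP => le.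
- by move: xE; rewrite (hE (f y) (map_f f yl) x le).
- by move: fxU; rewrite (metric_sym dm) in le; rewrite (hU y yl (f x) le).
Qed.

Lemma exists_separated_seq : exists pt : nat -> X, forall m j, m%:R < d (f (pt m)) (pt j).
Proof.
pose next n l := sval (cid (exists_separated_next n l)).
have nextP n l := svalP (cid (exists_separated_next n l)).
pose fix pts n := if n is n'.+1 then rcons (pts n') (next n' (pts n')) else [::].
pose pt n := next n (pts n).
have pts_mem j n : (j < n)%N -> pt j \in pts n.
  elim: n => [//|n IH]; rewrite [pts n.+1]/= mem_rcons in_cons ltnS leq_eqVlt.
  by case/orP => [/eqP ->|/IH ->]; rewrite ?eqxx ?orbT.
exists pt => m j; have [jm|mj|->] := ltngtP j m.
- by case: (nextP m (pts m)) => _ _ /(_ _ (pts_mem _ _ jm)).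
- case: (nextP j (pts j)) => _ /(_ _ (pts_mem _ _ mj)) jsep _.
  have : m%:R < j%:R :> R by rewrite ltr_nat.
  by rewrite /pt /next; lra.
- by case: (nextP m (pts m)) => + _ _; rewrite (metric_sym dm).
Qed.

End Unbounded.

Lemma close_to_identity : exists r : R, forall x, d x (f x) <= r.
Proof.
have [//|bounded] := pselect (exists r : R, forall x, d x (f x) <= r); exfalso.
have unbounded (B : R) : exists x, B < d x (f x).
  have [//|small] := pselect (exists x, B < d x (f x)); exfalso; apply: bounded.
  by exists B => x; rewrite leNgt; apply/negP => lt; apply: small; exists x.
have [pt sep] := exists_separated_seq unbounded.
have [r near] := near_image (range pt).
have [m rm] := exists_nat_gt r.
have [_ [j _ <-] le] := near (pt m) (ex_intro2 _ _ m I erefl).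
by have := sep m j; lra.
Qed.

End CloseToIdentity.

Theorem proposition6p1p9 (R : realType) (X : choiceType) (d : X -> X -> R)
  (s : mat R X -> mat R X) (f : X -> X) :
  is_metric d -> unif_loc_finite d -> is_Cu_automorphism d s ->
  (exists c : R, 0 < c /\
     forall x : X, ((c ^+ 2)%:E <= l2norm2 (fun z => s (eproj x) z (f x)))%E) ->
  (forall A : set X, exists u : mat R X,
     unitary_Cu d u /\ s (proj A) = mprod (mprod u (proj A)) (adj u)) ->
  exists r : R, forall x : X, d x (f x) <= r.
Proof.
move=> dm ulf hs [c [c_gt0 hc]] conj_proj.
have image_point_large x : c ^+ 2 <= colnorm2 (s (proj [set x])) (f x).
  rewrite -lee_fin; apply: le_trans (hc x) (l2norm2_col_le dm ulf _ _).
  exact: (Cu_image_proj dm hs [set x]).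
apply: (close_to_identity (k := c ^+ 2)) => //.
- by rewrite exprn_gt0.
- by move=> L U; apply: (image_fibers_bound dm ulf hs image_point_large).
- move=> A; have [u [uu sA]] := conj_proj A.
  exact: (image_near dm ulf hs image_point_large c_gt0 uu sA).
Qed.
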